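(* Let $D$ be a $3$-dicritical digraph not isomorphic to $\overleftrightarrow{K_3}$ or to $\vec{W_3}$, and let $T$ be a tree such that the bidirected tree $\overleftrightarrow{T}$ (obtained from $T$ by replacing each edge by a digon) is a subdigraph of $D$. Then the number of unordered pairs $\{u,v\}$ of distinct vertices of $T$ such that neither $uv$ nor $vu$ is an arc of $D$ is at least $\mathrm{dearth}(T)$.
   Context: Digraphs are finite, without loops or parallel arcs; a digon is a pair of arcs $uv,vu$. A $2$-dicolouring is a map to $\{1,2\}$ whose colour classes induce acyclic subdigraphs. $D$ is $3$-dicritical if $D$ has no $2$-dicolouring but every proper subdigraph has one. $\overleftrightarrow{K_3}$ has 3 vertices and all 6 arcs; $\vec{W_3}$ is a directed triangle $a\to b\to c\to a$ plus a vertex $r$ joined by a digon to each of $a,b,c$. For a tree $T$, $V_3(T)$ is the set of vertices of degree at least 3, an odd pair is a pair of non-adjacent vertices of $T$ at odd distance in $T$, $\mathrm{op}(T)$ is the number of odd pairs, and $\mathrm{dearth}(T)=\sum_{v\in V_3(T)}\frac16 d_T(v)(d_T(v)-1)+\mathrm{op}(T)$. *)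

From mathcomp Require Import all_boot all_order all_algebra.
Set Implicit Arguments. Unset Strict Implicit. Unset Printing Implicit Defensive.
Import GRing.Theory Num.Theory.

(* A digraph is a finite vertex type V with an arc relation a : rel V
   (no parallel arcs by construction; loops are excluded by hypothesis). *)

Definition restr (V : finType) (X : {set V}) (r : rel V) : rel V :=
  fun u v => [&& u \in X, v \in X & r u v].

Definition acyclic_on (V : finType) (X : {set V}) (r : rel V) : bool :=
  ~~ [exists x, exists y, restr X r x y && connect (restr X r) y x].

Definition two_dicolourable (V : finType) (S : {set V}) (r : rel V) : Prop :=
  exists c : V -> bool, forall b : bool, acyclic_on [set x in S | c x == b] r.

Definition subdigraph (V : finType) (a : rel V) (S : {set V}) (r : rel V) :=
  forall x y, r x y -> [&& a x y, x \in S & y \in S].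

Definition proper_sub (V : finType) (a : rel V) (S : {set V}) (r : rel V) :=
  S != setT \/ exists x y, a x y && ~~ r x y.

Definition dicritical3 (V : finType) (a : rel V) : Prop :=
  ~ two_dicolourable setT a /\
  forall (S : {set V}) (r : rel V), subdigraph a S r -> proper_sub a S r ->
    two_dicolourable S r.

Definition digraph_iso (V W : finType) (a : rel V) (b : rel W) : Prop :=
  exists f : V -> W, bijective f /\ forall x y, a x y = b (f x) (f y).

Definition K3bi : rel 'I_3 := fun i j => i != j.

(* W_3: directed triangle 0 -> 1 -> 2 -> 0, plus vertex 3 in a digon with each *)
Definition W3arc : rel 'I_4 := fun i j =>
  [|| (val i == 0) && (val j == 1), (val i == 1) && (val j == 2),
      (val i == 2) && (val j == 0), (val i == 3) && (val j != 3)
    | (val j == 3) && (val i != 3)].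

(* A tree T with vertex set VT (a subset of V) and symmetric edge relation e:
   nonempty, connected, and every edge is a bridge (minimally connected). *)
Definition is_tree (V : finType) (VT : {set V}) (e : rel V) : Prop :=
  VT != set0 /\
  (forall x y, e x y -> [&& x != y, x \in VT & y \in VT]) /\
  (forall x y, e x y = e y x) /\
  (forall x y, x \in VT -> y \in VT -> connect e x y) /\
  (forall x y, e x y ->
     ~~ connect (fun u v => e u v && ([set u; v] != [set x; y])) x y).

Definition degT (V : finType) (VT : {set V}) (e : rel V) (v : V) : nat :=
  #|[set u in VT | e v u]|.

Definition walk_len (V : finType) (e : rel V) (u v : V) (n : nat) : bool :=
  [exists t : n.-tuple V, path e u t && (last u t == v)].

(* the distance from u to v along e (length of a shortest walk, which is
   necessarily < #|V|) exists and is odd *)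
Definition odd_dist (V : finType) (e : rel V) (u v : V) : bool :=
  [exists n : 'I_#|V|, [&& odd n, walk_len e u v n &
     [forall m : 'I_n, ~~ walk_len e u v m]]].

Definition upairs (V : finType) (X : {set V}) (P : V -> V -> bool) : nat :=
  #|[set Q : {set V} | [&& #|Q| == 2, Q \subset X &
       [forall u in Q, forall v in Q, (u != v) ==> P u v]]]|.

Definition op (V : finType) (VT : {set V}) (e : rel V) : nat :=
  upairs VT (fun u v => ~~ e u v && odd_dist e u v).

Definition dearth (V : finType) (VT : {set V}) (e : rel V) : rat :=
  (\sum_(v in VT | (3 <= degT VT e v)%N)
      ((degT VT e v * (degT VT e v - 1))%N%:R / 6%:R) + (op VT e)%:R)%R.

Definition missing (V : finType) (a : rel V) (VT : {set V}) : nat :=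
  upairs VT (fun u v => ~~ a u v && ~~ a v u).

From Pilot Require Import Defs.
From mathcomp Require Import all_boot all_order all_algebra.
Set Implicit Arguments. Unset Strict Implicit. Unset Printing Implicit Defensive.
Import Order.POrderTheory GRing.Theory Num.Theory.

(* Every vertex of T is joined in D by digons to its T-neighbours, and deleting
   any arc pq of the 3-dicritical digraph D leaves a 2-dicolouring, which must
   put p and q in one colour class containing no path from p to q.
   Three T-neighbours p, q, s of a vertex v are never pairwise adjacent in D: a
   directed triangle p -> q -> s -> p spans a copy of W_3 together with v, so
   D = W_3; and in a transitive triangle p -> q -> s, p -> s, deleting ps, the
   digons at v force p, q, s into one colour class, where p -> q -> s is a path.
   Hence among the d neighbours of a vertex every triple has a non-adjacent
   pair, and double counting gives at least d(d-1)/6 of them.  The ends of an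
   odd pair xy are non-adjacent too: deleting xy, the colouring alternates
   along the bidirected tree, hence separates x from y.  All these pairs are
   distinct, since two neighbours of a vertex are at distance 2 and two
   vertices of a tree have at most one common neighbour. *)

Lemma sum_nat_of_bool (T : finType) (A : {pred T}) (b : pred T) :
  \sum_(z in A) b z = #|[set z in A | b z]|.
Proof.
rewrite -sum1dep_card big_mkcondr /=.
by apply: eq_bigr => z _; case: (b z).
Qed.

Definition distinct3 (T : eqType) (x y z : T) := [&& x != y, y != z & x != z].

Lemma distinct3_rotate (T : eqType) (x y z : T) : distinct3 y z x = distinct3 x y z.
Proof.
rewrite /distinct3 (eq_sym z x) (eq_sym y x).
by case: (x != y); case: (y != z); case: (x != z).
Qed.

Lemma distinct3_swap23 (T : eqType) (x y z : T) : distinct3 x z y = distinct3 x y z.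
Proof.
rewrite /distinct3 (eq_sym z y).
by case: (x != y); case: (y != z); case: (x != z).
Qed.

Section TripleCount.
Variables (T : finType) (N : {set T}) (I : rel T).

Lemma sum_neq x : x \in N -> \sum_(y in N) (x != y) = #|N| - 1.
Proof.
move=> xN; rewrite sum_nat_of_bool (cardsD1 x N) xN add1n subn1 /=.
by apply: eq_card => y; rewrite !inE eq_sym andbC.
Qed.

Lemma sum_distinct3_fixed x y : x \in N -> y \in N -> x != y ->
  \sum_(z in N) distinct3 x y z = #|N| - 2.
Proof.
move=> xN yN xy; rewrite sum_nat_of_bool.
have -> : [set z in N | distinct3 x y z] = N :\: [set x; y].
  apply/setP => z; rewrite !inE /distinct3 xy negb_or (eq_sym y) (eq_sym x) /=.
  by case: (z \in N); case: (z != x); case: (z != y).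
rewrite cardsDS ?cards2 ?xy //.
by apply/subsetP => z; rewrite !inE => /orP [] /eqP ->.
Qed.

Lemma sum_distinct3 :
  \sum_(x in N) \sum_(y in N) \sum_(z in N) distinct3 x y z
    = #|N| * (#|N| - 1) * (#|N| - 2).
Proof.
rewrite -mulnA -sum_nat_const; apply: eq_bigr => x xN.
rewrite -(sum_neq xN) big_distrl /=; apply: eq_bigr => y yN.
have [<-|xy] := eqVneq x y; last by rewrite sum_distinct3_fixed //= mul1n.
by rewrite big1 // => z _; rewrite /distinct3 eqxx.
Qed.

Lemma sum_distinct3_rel :
  \sum_(x in N) \sum_(y in N) \sum_(z in N) (distinct3 x y z * I x y)
    = (\sum_(x in N) \sum_(y in N) ((x != y) && I x y)) * (#|N| - 2).
Proof.
rewrite big_distrl /=; apply: eq_bigr => x xN.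
rewrite big_distrl /=; apply: eq_bigr => y yN.
have [/andP [xy Ixy]|nIxy] := boolP ((x != y) && I x y).
  rewrite -(sum_distinct3_fixed xN yN xy) mul1n.
  by apply: eq_bigr => z _; rewrite Ixy muln1.
rewrite mul0n big1 // => z _; move: nIxy; rewrite /distinct3.
by case: (x != y); case: (I x y); rewrite ?muln0.
Qed.

Hypothesis I_triple : forall x y z, x \in N -> y \in N -> z \in N ->
  distinct3 x y z -> [|| I x y, I y z | I x z].

(* Each ordered triple of distinct vertices has an I-pair in one of the
   positions xy, yz, xz, and the three positions give equal sums. *)
Lemma distinct3_count_le :
  #|N| * (#|N| - 1) * (#|N| - 2)
    <= 3 * ((\sum_(x in N) \sum_(y in N) ((x != y) && I x y)) * (#|N| - 2)).
Proof.
rewrite -sum_distinct3 -sum_distinct3_rel.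
pose S F := \sum_(x in N) \sum_(y in N) \sum_(z in N) (distinct3 x y z * F x y z).
have rotate : S (fun x y z => I y z) = S (fun x y z => I x y).
  rewrite /S exchange_big /=; apply: eq_bigr => y _.
  rewrite exchange_big /=; apply: eq_bigr => z _.
  by apply: eq_bigr => x _; rewrite [in RHS]distinct3_rotate.
have swap : S (fun x y z => I x z) = S (fun x y z => I x y).
  apply: eq_bigr => x _; rewrite exchange_big /=; apply: eq_bigr => z _.
  by apply: eq_bigr => y _; rewrite [in RHS]distinct3_swap23.
rewrite -/(S (fun x y z => I x y)) (mulSn 2) (mulSn 1) mul1n.
rewrite -{2}rotate -{2}swap /S -!big_split /=.
apply: leq_sum => x xN; rewrite -!big_split /=; apply: leq_sum => y yN.
rewrite -!big_split /=; apply: leq_sum => z zN; rewrite -!mulnDr.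
have [/(I_triple xN yN zN)|] := boolP (distinct3 x y z); last by rewrite !mul0n.
by rewrite !mul1n; case: (I x y) (I y z) (I x z) => [] [] [].
Qed.

End TripleCount.

Definition pairs (T : finType) (X : {set T}) (P : rel T) : {set {set T}} :=
  [set Q : {set T} | [&& #|Q| == 2, Q \subset X &
     [forall u in Q, forall v in Q, (u != v) ==> P u v]]].

Lemma upairsE (T : finType) (X : {set T}) (P : rel T) : upairs X P = #|pairs X P|.
Proof. by []. Qed.

Section Pairs.
Variables (T : finType) (X : {set T}) (P : rel T).

Lemma pairs_card2 Q : Q \in pairs X P -> exists x y, x != y /\ Q = [set x; y].
Proof. by rewrite inE => /and3P [/cards2P]. Qed.

Lemma pairs_eq2 Q x y : Q \in pairs X P -> x \in Q -> y \in Q -> x != y ->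
  Q = [set x; y].
Proof.
rewrite inE => /and3P [/eqP Q2 _ _] xQ yQ xy; apply/eqP.
by rewrite eq_sym eqEcard subUset !sub1set xQ yQ cards2 xy Q2.
Qed.

Lemma mem_pairs2 x y : x != y ->
  ([set x; y] \in pairs X P) = [&& x \in X, y \in X, P x y & P y x].
Proof.
move=> xy; rewrite inE cards2 xy subUset !sub1set /= -!andbA; congr [&& _, _ & _].
apply/forall_inP/andP => [Hxy | [Pxy Pyx] u].
  have /forall_inP Hx := Hxy x (set21 x y); have /forall_inP Hy := Hxy y (set22 x y).
  by move: (Hx y (set22 x y)) (Hy x (set21 x y)); rewrite xy eq_sym xy.
rewrite !inE => /orP [] /eqP ->; apply/forall_inP => v; rewrite !inE => /orP [] /eqP ->;
  by rewrite ?eqxx ?Pxy ?Pyx ?implybT.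
Qed.

Hypothesis P_sym : symmetric P.

Lemma card_pairs_through x y : x \in X -> y \in X ->
  #|[set Q in pairs X P | [&& x \in Q, y \in Q & x != y]]| = (x != y) && P x y.
Proof.
move=> xX yX; have [<-|xy /=] := eqVneq x y.
  by apply: eq_card0 => Q; rewrite !inE !andbF.
have [Pxy|nPxy] := boolP (P x y).
  rewrite /= -(cards1 [set x; y]); apply: eq_card => Q; rewrite in_set andbT in_set1.
  apply/idP/eqP => [/and3P [QP xQ yQ]|->]; first exact: pairs_eq2.
  by rewrite mem_pairs2 // xX yX Pxy -P_sym Pxy set21 set22.
apply: eq_card0 => Q; rewrite in_set andbT.
apply/negP => /and3P [QP xQ yQ]; have := QP.
by rewrite (pairs_eq2 QP xQ yQ xy) mem_pairs2 // (negbTE nPxy) !andbF.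
Qed.

Lemma sum_pairs_members Q : Q \in pairs X P ->
  \sum_(x in X) \sum_(y in X) [&& x \in Q, y \in Q & x != y] = 2.
Proof.
move=> QP; move: (QP); rewrite inE => /and3P [/eqP Q2 QX _].
have in_XQ x : (x \in X) && (x \in Q) = (x \in Q).
  by apply/andP/idP => [[]|xQ] //; rewrite (subsetP QX).
rewrite (eq_bigr (fun x => x \in Q : nat)) => [|x _].
  by rewrite sum_nat_of_bool -Q2; apply: eq_card => x; rewrite inE in_XQ.
have [xQ|xQ] := boolP (x \in Q); last by rewrite big1.
rewrite /= sum_nat_of_bool; move: Q2; rewrite (cardsD1 x Q) xQ add1n => -[<-].
by apply: eq_card => y; rewrite !inE andbA in_XQ eq_sym andbC.
Qed.

Lemma sum_pairs :
  \sum_(x in X) \sum_(y in X) ((x != y) && P x y) = 2 * #|pairs X P|.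
Proof.
transitivity (\sum_(x in X) \sum_(y in X) \sum_(Q in pairs X P)
                [&& x \in Q, y \in Q & x != y]).
  apply: eq_bigr => x xX; apply: eq_bigr => y yX.
  by rewrite sum_nat_of_bool card_pairs_through.
under eq_bigr => x _ do rewrite exchange_big.
rewrite exchange_big /= mulnC -sum_nat_const.
exact: eq_bigr sum_pairs_members.
Qed.

End Pairs.

Lemma subset_pairs (T : finType) (X Y : {set T}) (P P' : rel T) : X \subset Y ->
  {in X &, forall x y, P x y -> P y x -> P' x y} -> pairs X P \subset pairs Y P'.
Proof.
move=> XY PP'; apply/subsetP => Q /[dup] QP /pairs_card2 [x [y [xy EQ]]].
move: QP; rewrite EQ !mem_pairs2 // => /and4P [xX yX Pxy Pyx].
by rewrite !(subsetP XY) //= !PP'.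
Qed.

Lemma pairs_lower_bound_of_triples (T : finType) (N : {set T}) (I : rel T) :
  symmetric I ->
  (forall x y z, x \in N -> y \in N -> z \in N -> distinct3 x y z ->
     [|| I x y, I y z | I x z]) ->
  3 <= #|N| -> #|N| * (#|N| - 1) <= 6 * #|pairs N I|.
Proof.
move=> I_sym I_triple N3; have := distinct3_count_le I_triple.
by rewrite sum_pairs // mulnA leq_pmul2r ?subn_gt0 // mulnA.
Qed.

Lemma sum_card_disjoint_le (I T : finType) (P : pred I) (F : I -> {set T})
    (M : {set T}) :
  (forall i, P i -> F i \subset M) ->
  (forall i j, P i -> P j -> i != j -> [disjoint F i & F j]) ->
  \sum_(i | P i) #|F i| <= #|M|.
Proof.
move=> FM F_disj; pose G i := if P i then F i else set0.
have G_disj i j : i != j -> [disjoint G i & G j].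
  rewrite /G; case: (boolP (P i)) => Pi; case: (boolP (P j)) => Pj; first exact: F_disj;
    by move=> _; apply/pred0P => x /=; rewrite inE ?andbF.
have -> : \sum_(i | P i) #|F i| = #|\bigcup_i G i|.
  rewrite -sum1_card partition_disjoint_bigcup // big_mkcond /=.
  by apply: eq_bigr => i _; rewrite sum1_card /G; case: (P i); rewrite ?cards0.
apply/subset_leq_card/bigcupsP => i _; rewrite /G.
by case: (boolP (P i)) => [/FM|_]; rewrite ?sub0set.
Qed.

Lemma connect_homo (T T' : finType) (e : rel T) (e' : rel T') (f : T -> T') :
  {homo f : x y / e x y >-> e' x y} -> {homo f : x y / connect e x y >-> connect e' x y}.
Proof.
move=> fh x y /connectP [p px ->]; apply/connectP.
by exists (map f p); [exact: homo_path fh px | rewrite last_map].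
Qed.

Lemma connect_first (T : finType) (e : rel T) x y :
  x != y -> connect e x y -> exists2 z, e x z & connect e z y.
Proof.
move=> xy /connectP [[|z p] /=]; first by move=> _ yx; rewrite yx eqxx in xy.
by case/andP => exz zp ->; exists z => //; apply/connectP; exists p.
Qed.

Section Acyclicity.
Variables (V : finType) (X : {set V}).

Lemma digon_not_acyclic (r : rel V) x y : x \in X -> y \in X -> r x y -> r y x ->
  ~~ acyclic_on X r.
Proof.
move=> xX yX rxy ryx; rewrite negbK; apply/existsP; exists x; apply/existsP; exists y.
by rewrite /restr xX yX rxy; apply: connect1; rewrite /restr xX yX.
Qed.

Lemma triangle_not_acyclic (r : rel V) x y z : x \in X -> y \in X -> z \in X ->
  r x y -> r y z -> r z x -> ~~ acyclic_on X r.
Proof.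
move=> xX yX zX rxy ryz rzx; rewrite negbK; apply/existsP; exists x.
apply/existsP; exists y; rewrite /restr xX yX rxy.
by apply: (connect_trans (y := z)); apply: connect1; rewrite /restr ?xX ?yX ?zX.
Qed.

Lemma acyclic_on_homo (V' : finType) (X' : {set V'}) (r : rel V) (r' : rel V')
    (f : V -> V') :
  {homo f : x y / restr X r x y >-> restr X' r' x y} ->
  acyclic_on X' r' -> acyclic_on X r.
Proof.
move=> fh; apply: contra => /existsP [x /existsP [y /andP [rxy ryx]]].
by apply/existsP; exists (f x); apply/existsP; exists (f y); rewrite fh // (connect_homo fh).
Qed.

Lemma acyclic_on_connect (r s : rel V) : irreflexive s ->
  {in X &, forall x y, s x y -> connect (restr X r) x y} ->
  acyclic_on X r -> acyclic_on X s.
Proof.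
move=> s_irr sr; apply: contra => /existsP [x /existsP [y /andP [sxy syx]]].
case/and3P: sxy => xX yX sxy.
have sub : subrel (restr X s) (connect (restr X r)).
  by move=> u w /and3P [uX wX suw]; apply: sr.
have xy : x != y by apply: contraTneq sxy => ->; rewrite s_irr.
have [z rxz rzy] := connect_first xy (sr x y xX yX sxy).
apply/existsP; exists x; apply/existsP; exists z; rewrite rxz.
exact: connect_trans rzy (connect_sub sub syx).
Qed.

End Acyclicity.

Definition dicolouring (V : finType) (S : {set V}) (r : rel V) (c : V -> bool) :=
  forall b, acyclic_on [set x in S | c x == b] r.

Lemma dicolouring_digon (V : finType) (S : {set V}) (r : rel V) c x y :
  dicolouring S r c -> x \in S -> y \in S -> r x y -> r y x -> c x != c y.
Proof.
move=> cr xS yS rxy ryx; apply/eqP => cxy; move: (cr (c x)); apply/negP.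
by apply: (digon_not_acyclic (x := x) (y := y)); rewrite // !inE ?xS ?yS ?cxy ?eqxx.
Qed.

Lemma W3arc_not_two_dicolourable : ~ two_dicolourable setT W3arc.
Proof.
move=> [c cW3]; pose o i (lt_i4 : i < 4) : 'I_4 := Ordinal lt_i4.
have rim (i : 'I_4) : val i != 3 -> c i = ~~ c (o 3 isT).
  move=> i3; have := dicolouring_digon (x := i) (y := o 3 isT) cW3.
  rewrite !inE /W3arc /= i3 ?orbT ?orTb => /(_ isT isT isT isT).
  by case: (c i); case: (c (o 3 isT)).
move: (cW3 (~~ c (o 3 isT))); apply/negP.
by apply: (triangle_not_acyclic (x := o 0 isT) (y := o 1 isT) (z := o 2 isT));
  rewrite // !inE rim ?eqxx.
Qed.

Section Dicritical.
Variables (V : finType) (a : rel V).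
Hypothesis a_loopless : forall x, ~~ a x x.
Hypothesis a_dicritical : dicritical3 a.

Lemma dicritical_spanning (S : {set V}) (r : rel V) :
  subdigraph a S r -> ~ two_dicolourable S r -> S = setT /\ subrel a r.
Proof.
move=> Sr Snd; case: a_dicritical => _ a_crit.
have Sr_full : ~ Defs.proper_sub a S r by move=> Sr_proper; apply/Snd/a_crit.
split; first by case: (eqVneq S setT) => // S_proper; case: Sr_full; left.
move=> x y axy; apply/negPn/negP => nrxy; apply: Sr_full; right.
by exists x, y; rewrite axy.
Qed.

Lemma dicritical_copy_iso (W : finType) (b : rel W) (g : W -> V) :
  injective g -> (forall u w, b u w -> a (g u) (g w)) ->
  ~ two_dicolourable setT b -> digraph_iso a b.
Proof.
move=> g_inj g_hom b_nd.
pose r x y := [exists u, exists w, [&& g u == x, g w == y & b u w]].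
have Sr : subdigraph a (g @: setT) r.
  by move=> _ _ /existsP [u /existsP [w /and3P [/eqP <- /eqP <- /g_hom ->]]];
    rewrite !imset_f.
have [ST ar] : g @: setT = setT /\ subrel a r.
  apply: dicritical_spanning Sr _ => -[c cr]; apply: b_nd; exists (c \o g) => k.
  apply: (acyclic_on_homo (f := g)) (cr k) => u w /and3P [uX wX buw].
  rewrite /restr !inE !imset_f //=; move: uX wX; rewrite !inE /= => -> ->.
  by apply/existsP; exists u; apply/existsP; exists w; rewrite !eqxx.
have [h gK hK] : bijective g.
  by apply: (inj_card_bij g_inj); rewrite -cardsT -ST -[#|W|]cardsT leq_imset_card.
exists h; split; first by exists g.
move=> x y; apply/idP/idP => [/ar /existsP [u /existsP [w]]|/g_hom]; last by rewrite !hK.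
by case/and3P => /eqP <- /eqP <-; rewrite !gK.
Qed.

Definition delarc (p q : V) : rel V := fun x y => a x y && ((x, y) != (p, q)).

Lemma dicritical_delarc p q : a p q -> exists c, [/\ dicolouring setT (delarc p q) c,
  c p = c q & ~~ connect (restr [set x in setT | c x == c p] (delarc p q)) p q].
Proof.
move=> apq; case: a_dicritical => a_nd a_crit.
have [c cdel] : two_dicolourable setT (delarc p q).
  apply: a_crit; first by move=> x y /andP [axy _]; rewrite axy !inE.
  by right; exists p, q; rewrite apq /delarc eqxx andbF.
exists c; have [/andP [/eqP cpq npq] | pq_spanned] := boolP
  ((c p == c q) && ~~ connect (restr [set x in setT | c x == c p] (delarc p q)) p q).
  by split.
(* Otherwise each arc of a inside a colour class is spanned by a path of the
   class avoiding pq, so c would dicolour a. *)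
exfalso; apply: a_nd; exists c => k.
apply: acyclic_on_connect (cdel k) => [x|x y xX yX axy]; first exact/negbTE.
have [[xp yq]|xy_pq] := eqVneq (x, y) (p, q); last first.
  by apply: connect1; rewrite /restr xX yX /delarc axy xy_pq.
move: xX yX pq_spanned; rewrite xp yq !inE /= => /eqP cp_k /eqP cq_k.
by rewrite cp_k cq_k eqxx /= negbK.
Qed.

End Dicritical.

Lemma path_parity (T : Type) (e : rel T) (c : T -> bool) :
  (forall x y, e x y -> c x != c y) ->
  forall u p, path e u p -> c (last u p) = odd (size p) (+) c u.
Proof.
move=> c_flip u p; elim: p u => [|w p IHp] u /=; first by case: (c u).
case/andP => euw /IHp ->; move/c_flip: euw.
by case: (c u); case: (c w); case: (odd (size p)).
Qed.

Lemma walk_len1 (T : finType) (e : rel T) x y : walk_len e x y 1 = e x y.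
Proof.
apply/existsP/idP => [[[[|z [|]] //= _]]|exy].
  by rewrite andbT => /andP [exz /eqP <-].
by exists [tuple y]; rewrite /= exy eqxx.
Qed.

Lemma odd_dist_common_nbr (T : finType) (e : rel T) x v y :
  e x v -> e v y -> odd_dist e x y -> e x y.
Proof.
move=> exv evy /existsP [[n lt_n] /and3P [/= odd_n walk_n /forallP shortest]].
have walk2 : walk_len e x y 2.
  by apply/existsP; exists [tuple v; y]; rewrite /= exv evy eqxx.
have n_le2 : n <= 2.
  by rewrite leqNgt; apply/negP => lt2n; move: (shortest (Ordinal lt2n)); rewrite walk2.
by case: n {lt_n shortest} n_le2 odd_n walk_n => [|[|[|n]]] // _ _; rewrite walk_len1.
Qed.

Definition nonadj (V : finType) (a : rel V) : rel V := fun x y => ~~ a x y && ~~ a y x.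

Definition odd_pair (V : finType) (e : rel V) : rel V := fun x y => ~~ e x y && odd_dist e x y.

Section Tree.
Variables (V : finType) (e : rel V).
Hypothesis e_loopless : irreflexive e.
Hypothesis e_sym : symmetric e.
Hypothesis e_bridge : forall x y, e x y ->
  ~~ connect (fun u v => e u v && ([set u; v] != [set x; y])) x y.

Lemma tree_edge_neq x y : e x y -> x != y.
Proof. by apply: contraTneq => ->; rewrite e_loopless. Qed.

Lemma tree_no_C4 v w x y : e v x -> e v y -> e w x -> e w y -> x != y -> v = w.
Proof.
move=> evx evy ewx ewy xy; apply/eqP/negPn/negP => vw.
have other_edge u u' : u \notin [set x; v] -> [set u; u'] != [set x; v].
  by apply: contra => /eqP <-; rewrite !inE eqxx.
have w_off : w \notin [set x; v].
  by rewrite !inE negb_or tree_edge_neq //= eq_sym.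
have exv : e x v by rewrite e_sym.
have/negP := e_bridge exv; apply.
apply: (connect_trans (y := w)); first by apply: connect1; rewrite e_sym ewx setUC other_edge.
apply: (connect_trans (y := y)); first by apply: connect1; rewrite ewy other_edge.
apply: connect1; rewrite e_sym evy other_edge //.
by rewrite !inE negb_or eq_sym xy eq_sym tree_edge_neq.
Qed.

End Tree.

Definition nbhd (V : finType) (VT : {set V}) (e : rel V) (v : V) : {set V} :=
  [set u in VT | e v u].

Lemma nbhd_sub (V : finType) (VT : {set V}) (e : rel V) v : nbhd VT e v \subset VT.
Proof. by rewrite /nbhd setIdE subsetIl. Qed.

Lemma pairs_nbhd (V : finType) (VT : {set V}) (e P : rel V) v Q :
  Q \in pairs (nbhd VT e v) P -> exists x y, [/\ x != y, Q = [set x; y], e v x & e v y].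
Proof.
move=> /[dup] Qv /pairs_card2 [x [y [xy EQ]]]; exists x, y.
by move: Qv; rewrite EQ mem_pairs2 // !inE => /and4P [/andP [_ ->] /andP [_ ->] _ _].
Qed.

Section TreeInDicritical.
Variables (V : finType) (a : rel V) (e : rel V).
Hypothesis a_loopless : forall x, ~~ a x x.
Hypothesis a_dicritical : dicritical3 a.
Hypothesis a_not_W3 : ~ digraph_iso a W3arc.
Hypothesis e_loopless : irreflexive e.
Hypothesis e_sym : symmetric e.
Hypothesis e_a : subrel e a.
Variable VT : {set V}.
Hypothesis e_bridge : forall x y, e x y ->
  ~~ connect (fun u v => e u v && ([set u; v] != [set x; y])) x y.

Lemma delarc_kept p q x y : a x y -> (x != p) || (y != q) -> delarc a p q x y.
Proof. by move=> axy xy_pq; rewrite /delarc axy xpair_eqE negb_and. Qed.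

Lemma nbrs_no_transitive v p q s : e v p -> e v q -> e v s -> p != q -> q != s ->
  a p q -> a q s -> a p s -> False.
Proof.
move=> evp evq evs pq qs apq aqs aps.
have [c [c_del cps no_path]] := dicritical_delarc a_loopless a_dicritical aps.
move/negP: no_path; apply.
have [vp vs] := (tree_edge_neq e_loopless evp, tree_edge_neq e_loopless evs).
have [avp avq] := (e_a evp, e_a evq).
have [apv aqv] : a p v /\ a q v by rewrite !e_a // e_sym.
have cvp : c v != c p.
  by apply: (dicolouring_digon c_del); rewrite ?inE // delarc_kept // ?vp ?vs ?orbT.
have cvq : c v != c q.
  by apply: (dicolouring_digon c_del); rewrite ?inE // delarc_kept // ?vp ?(eq_sym q) ?pq.
have cqp : c q = c p by move: cvp cvq; case: (c v); case: (c p); case: (c q).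
apply: (connect_trans (y := q)); apply: connect1.
  by rewrite /restr !inE cqp eqxx delarc_kept // qs orbT.
by rewrite /restr !inE cqp cps eqxx delarc_kept // eq_sym pq.
Qed.

Lemma nbrs_no_dicycle v p q s : e v p -> e v q -> e v s ->
  p != q -> q != s -> p != s -> a p q -> a q s -> a s p -> False.
Proof.
move=> evp evq evs pq qs ps apq aqs asp; apply: a_not_W3.
have g_inj : injective (tnth [tuple p; q; s; v]).
  apply/tuple_uniqP; rewrite /= !inE !negb_or pq ps qs /=.
  by rewrite !(eq_sym _ v) !(tree_edge_neq e_loopless).
apply: (dicritical_copy_iso a_dicritical g_inj _ W3arc_not_two_dicolourable).
move=> [[|[|[|[|i]]]] Hi] [[|[|[|[|j]]]] Hj] //; rewrite /W3arc /= => _.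
all: apply: e_a => //=; by rewrite e_sym.
Qed.

Lemma nbrs_no_2path v x y z : e v x -> e v y -> e v z ->
  x != y -> y != z -> x != z -> a x y -> a y z -> a x z || a z x -> False.
Proof.
move=> evx evy evz xy yz xz axy ayz /orP [axz|azx].
  exact: (nbrs_no_transitive evx evy evz xy yz axy ayz axz).
exact: (nbrs_no_dicycle evx evy evz xy yz xz axy ayz azx).
Qed.

Lemma nbrs_triple_nonadj v x y z : e v x -> e v y -> e v z -> distinct3 x y z ->
  [|| nonadj a x y, nonadj a y z | nonadj a x z].
Proof.
move=> evx evy evz /and3P [xy yz xz].
have [yx zy zx] : [/\ y != x, z != y & z != x] by split; rewrite eq_sym.
rewrite /nonadj -!negb_or -!negb_and; apply/negP.
case/and3P => /orP [axy|ayx] /orP [ayz|azy] adj_xz.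
- exact: (nbrs_no_2path evx evy evz xy yz xz axy ayz).
- case/orP: adj_xz => [axz|azx].
    by apply: (nbrs_no_2path evx evz evy xz zy xy axz azy); rewrite axy.
  by apply: (nbrs_no_2path evz evx evy zx xy zy azx axy); rewrite azy.
- case/orP: adj_xz => [axz|azx].
    by apply: (nbrs_no_2path evy evx evz yx xz yz ayx axz); rewrite ayz.
  by apply: (nbrs_no_2path evy evz evx yz zx yx ayz azx); rewrite ayx.
- by apply: (nbrs_no_2path evz evy evx zy yx zx azy ayx); rewrite orbC.
Qed.

Lemma odd_pair_nonadj x y : odd_pair e x y -> ~~ a x y.
Proof.
case/andP => nexy /existsP [n /and3P [odd_n /existsP [p /andP [e_p /eqP p_y]] _]].
apply/negP => axy; have [c [c_del cxy _]] := dicritical_delarc a_loopless a_dicritical axy.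
have c_flip u w : e u w -> c u != c w.
  move=> euw; have ewu : e w u by rewrite e_sym.
  have kept u' w' : e u' w' -> delarc a x y u' w'.
    by move=> euw'; rewrite /delarc e_a //; apply: contraNneq nexy => -[<- <-].
  by apply: (dicolouring_digon c_del); rewrite ?inE ?kept.
by move: (path_parity c_flip e_p); rewrite p_y size_tuple odd_n cxy; case: (c y).
Qed.

Lemma nbhd_pairs_lower_bound v : 3 <= degT VT e v ->
  degT VT e v * (degT VT e v - 1) <= 6 * #|pairs (nbhd VT e v) (nonadj a)|.
Proof.
apply: pairs_lower_bound_of_triples => [x y|x y z]; first by rewrite /nonadj andbC.
rewrite !inE => /andP [_ evx] /andP [_ evy] /andP [_ evz].
exact: nbrs_triple_nonadj evx evy evz.
Qed.

Lemma nbhd_odd_pairs_count :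
  \sum_(v in VT | 3 <= degT VT e v) #|pairs (nbhd VT e v) (nonadj a)|
    + #|pairs VT (odd_pair e)| <= #|pairs VT (nonadj a)|.
Proof.
set M := pairs VT (nonadj a); set O := pairs VT (odd_pair e).
have OM : O \subset M.
  apply: subset_pairs => // x y _ _ /odd_pair_nonadj axy /odd_pair_nonadj ayx.
  by rewrite /nonadj axy ayx.
have nbhd_M_O v : pairs (nbhd VT e v) (nonadj a) \subset M :\: O.
  rewrite subsetD subset_pairs ?nbhd_sub //=.
  apply/pred0P => Q /=; apply/negP => /andP [/pairs_nbhd [x [y [xy -> evx evy]]]].
  rewrite mem_pairs2 // => /and4P [_ _ /andP [/negP nexy odd_xy] _]; apply: nexy.
  by apply: (odd_dist_common_nbr _ evy odd_xy); rewrite e_sym.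
have nbhd_disj u w : u != w ->
    [disjoint pairs (nbhd VT e u) (nonadj a) & pairs (nbhd VT e w) (nonadj a)].
  move=> uw; apply/pred0P => Q /=; apply/negP.
  case/andP => /pairs_nbhd [x [y [xy -> ux uy]]].
  rewrite mem_pairs2 // !inE => /and4P [/andP [_ wx] /andP [_ wy] _ _].
  by move: uw; rewrite (tree_no_C4 e_loopless e_sym e_bridge ux uy wx wy xy) eqxx.
rewrite -(subnK (subset_leq_card OM)) leq_add2r -cardsDS //.
by apply: sum_card_disjoint_le => [v _|v w _ _]; [apply: nbhd_M_O | apply: nbhd_disj].
Qed.

End TreeInDicritical.

Theorem lemma30 (V : finType) (a : rel V) (VT : {set V}) (e : rel V) :
  (forall x, ~~ a x x) ->
  dicritical3 a ->
  ~ digraph_iso a K3bi ->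
  ~ digraph_iso a W3arc ->
  is_tree VT e ->
  (forall x y, e x y -> a x y) ->
  (dearth VT e <= (missing a VT)%:R)%R.
Proof.
(* The argument does not need D to differ from K3. *)
move=> a_loopless a_dicritical _ a_not_W3 [_ [e_VT [e_sym [_ e_bridge]]]] e_a.
have e_loopless : irreflexive e by move=> x; apply/negbTE/negP => /e_VT; rewrite eqxx.
have count : ((\sum_(v in VT | 3 <= degT VT e v) #|pairs (nbhd VT e v) (nonadj a)|)%N%:R
    + #|pairs VT (odd_pair e)|%:R <= #|pairs VT (nonadj a)|%:R :> rat)%R.
  rewrite -natrD ler_nat.
  exact: nbhd_odd_pairs_count a_loopless a_dicritical e_loopless e_sym e_a VT e_bridge.
rewrite /dearth /missing /op !upairsE; apply: le_trans count.
rewrite natr_sum lerD2r; apply: ler_sum => v /andP [_ deg3].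
rewrite ler_pdivrMr ?ltr0n // -natrM ler_nat [_ * 6]mulnC.
exact: nbhd_pairs_lower_bound a_loopless a_dicritical a_not_W3 e_loopless e_sym e_a _ _ deg3.
Qed.
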